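(* Let $\phi:M_D(\mathbb{C})\to M_D(\mathbb{C})$ be a primitive unital Schwarz map. Then $\mathcal{M}^\infty_\phi=\bigcap_{n\in\mathbb{N}}\mathcal{M}_{\phi^n}=\mathbb{C}I$.
   Context: $M_D(\mathbb{C})$ is the algebra of complex $D\times D$ matrices. A linear map $\phi$ is a unital Schwarz map if $\phi(I)=I$ and $\phi(a^*a)\ge\phi(a)^*\phi(a)$ for all $a$; it is primitive if some power $\phi^n$ maps every nonzero positive semidefinite matrix to a positive definite matrix. For a unital Schwarz map $\psi$, the multiplicative domain is $\mathcal{M}_\psi=\{a : \psi(a^*a)=\psi(a)^*\psi(a) \text{ and } \psi(aa^* )=\psi(a)\psi(a)^*\}$. For primitive unital Schwarz $\phi$ these form a decreasing sequence $\mathcal{M}_{\phi^{n+1}}\subseteq\mathcal{M}_{\phi^n}$; $\kappa(\phi)$ is the minimal $k$ with $\bigcap_n\mathcal{M}_{\phi^n}=\mathcal{M}_{\phi^k}$, and $\mathcal{M}^\infty_\phi:=\mathcal{M}_{\phi^{\kappa(\phi)}}$. *)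

From HB Require Import structures.
From mathcomp Require Import all_boot all_order all_algebra.
From mathcomp Require Import reals.
From mathcomp.real_closed Require Import complex.
Set Implicit Arguments. Unset Strict Implicit. Unset Printing Implicit Defensive.
Import Order.TTheory GRing.Theory Num.Theory.
Local Open Scope ring_scope.

Definition adjmx (C : numClosedFieldType) (m n : nat) (A : 'M[C]_(m, n)) : 'M[C]_(n, m) :=
  map_mx Num.conj A^T.

Definition psd (C : numClosedFieldType) (D : nat) (A : 'M[C]_D) : Prop :=
  adjmx A = A /\ forall v : 'cV[C]_D, 0 <= (adjmx v *m A *m v) ord0 ord0.

Definition posdef (C : numClosedFieldType) (D : nat) (A : 'M[C]_D) : Prop :=
  adjmx A = A /\ forall v : 'cV[C]_D, v != 0 -> 0 < (adjmx v *m A *m v) ord0 ord0.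

Definition unital_schwarz (C : numClosedFieldType) (D : nat)
  (phi : {linear 'M[C]_D -> 'M[C]_D}) : Prop :=
  phi 1%:M = 1%:M /\
  forall a : 'M[C]_D, psd (phi (adjmx a *m a) - adjmx (phi a) *m phi a).

Definition primitive (C : numClosedFieldType) (D : nat)
  (phi : {linear 'M[C]_D -> 'M[C]_D}) : Prop :=
  exists n : nat, forall x : 'M[C]_D, psd x -> x != 0 -> posdef (iter n phi x).

Definition mult_dom (C : numClosedFieldType) (D : nat)
  (psi : 'M[C]_D -> 'M[C]_D) (a : 'M[C]_D) : Prop :=
  psi (adjmx a *m a) = adjmx (psi a) *m psi a /\
  psi (a *m adjmx a) = psi a *m adjmx (psi a).

From HB Require Import structures.
From mathcomp Require Import all_boot all_order all_algebra.
From mathcomp Require Import reals.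
From mathcomp.real_closed Require Import complex.
Import Order.TTheory GRing.Theory Num.Theory.
Local Open Scope ring_scope.

(** Let [psi = phi^N] be strictly positive (primitivity) and let
    [psi (a^* a) = psi(a)^* psi(a)]. A Schwarz map commutes with the adjoint,
    by polarization of the hermitian matrices [phi (a^* a)]. Hence, for an
    eigenpair [(c, w)] of [psi a], unitality gives
    [psi ((a - c)^* (a - c)) = (psi a - c)^* (psi a - c)], which annihilates
    [w] and so is not positive definite; strict positivity forces [a = c].
    Conversely scalars lie in the multiplicative domain of every unital linear
    map, so the decreasing chain of domains is already [C I] at step [N]. *)

Section Adjoint.
Context {C : numClosedFieldType}.

Lemma adjmxK m n (A : 'M[C]_(m, n)) : adjmx (adjmx A) = A.
Proof. by apply/matrixP => i j; rewrite !mxE conjCK. Qed.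

Lemma adjmxD m n (A B : 'M[C]_(m, n)) : adjmx (A + B) = adjmx A + adjmx B.
Proof. by apply/matrixP => i j; rewrite !mxE rmorphD. Qed.

Lemma adjmxB m n (A B : 'M[C]_(m, n)) : adjmx (A - B) = adjmx A - adjmx B.
Proof. by apply/matrixP => i j; rewrite !mxE rmorphB. Qed.

Lemma adjmxZ m n c (A : 'M[C]_(m, n)) : adjmx (c *: A) = c^* *: adjmx A.
Proof. by apply/matrixP => i j; rewrite !mxE rmorphM. Qed.

Lemma adjmxM m n p (A : 'M[C]_(m, n)) (B : 'M[C]_(n, p)) :
  adjmx (A *m B) = adjmx B *m adjmx A.
Proof. by rewrite /adjmx trmx_mul map_mxM. Qed.

Lemma adjmx_scalar n c : adjmx (c%:M : 'M[C]_n) = c^*%:M.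
Proof. by rewrite /adjmx tr_scalar_mx map_scalar_mx. Qed.

Lemma adjmx_mul_diag_ge0 m n (A : 'M[C]_(m, n)) i : 0 <= (adjmx A *m A) i i.
Proof.
by rewrite mxE sumr_ge0 // => k _; rewrite !mxE mulrC mul_conjC_ge0.
Qed.

Lemma psd_adjmx_mul n (A : 'M[C]_n) : psd (adjmx A *m A).
Proof.
split=> [|v]; first by rewrite adjmxM adjmxK.
by rewrite -!mulmxA mulmxA -adjmxM adjmx_mul_diag_ge0.
Qed.

Lemma adjmx_mul_eq0 m n (A : 'M[C]_(m, n)) : (adjmx A *m A == 0) = (A == 0).
Proof.
apply/eqP/eqP => [AA0|->]; last by rewrite mulmx0.
apply/matrixP => k i; have /eqP := congr1 (fun M : 'M_n => M i i) AA0.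
rewrite !mxE psumr_eq0 => [/allP/(_ k (mem_index_enum _))|j _].
  by rewrite !mxE mulrC mul_conjC_eq0 => /eqP.
by rewrite !mxE mulrC mul_conjC_ge0.
Qed.

Lemma adjmx_mul_subr_scalar n (A : 'M[C]_n) c :
  adjmx (A - c%:M) *m (A - c%:M) =
  adjmx A *m A - (c *: adjmx A + c^* *: A) + (c^* * c)%:M.
Proof.
rewrite adjmxB adjmx_scalar mulmxBl !mulmxBr mul_mx_scalar !mul_scalar_mx.
by rewrite scale_scalar_mx opprB addrA addrAC opprD addrA.
Qed.

Lemma exists_col_eigenvector {n} (A : 'M[C]_n) :
  (0 < n)%N -> exists c, exists2 w : 'cV_n, w != 0 & A *m w = c *: w.
Proof.
case: n A => // n A _.
have /closed_rootP[c] : size (char_poly A^T) != 1 by rewrite size_char_poly.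
rewrite -eigenvalue_root_char => /eigenvalueP[v vA v0].
by exists c, v^T; rewrite ?trmx_eq0 // -[A]trmxK -trmx_mul vA linearZ.
Qed.

End Adjoint.

Definition strictly_positive {C : numClosedFieldType} {n}
    (f : 'M[C]_n -> 'M[C]_n) :=
  forall x, psd x -> x != 0 -> posdef (f x).

Section LinearMap.
Variables (C : numClosedFieldType) (n : nat) (f : 'M[C]_n -> 'M[C]_n).
Hypothesis f_lin : linear f.
#[local] HB.instance Definition _ :=
  GRing.isLinear.Build C 'M[C]_n 'M[C]_n *:%R f f_lin.

Lemma commute_adjmx_of_herm_squares :
  (forall a : 'M_n, adjmx (f (adjmx a *m a)) = f (adjmx a *m a)) ->
  forall a : 'M_n, f (adjmx a) = adjmx (f a).
Proof.
move=> herm a.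
have herm1 : adjmx (f 1%:M) = f 1%:M.
  by have := herm 1%:M; rewrite adjmx_scalar conjC1 mul1mx.
set P := f (adjmx a); set Q := f a.
(* Taking c = 1 and c = i: [P + Q] is hermitian and [P - Q] skew-hermitian. *)
have herm_shift c : c^* *: adjmx P + c *: adjmx Q = c *: P + c^* *: Q.
  have := herm (a - c%:M).
  rewrite adjmx_mul_subr_scalar -scalemx1 linearD linearB linearD !linearZ /=.
  rewrite -/P -/Q adjmxD adjmxB adjmxD !adjmxZ herm herm1.
  by rewrite rmorphM /= !conjCK [c * _]mulrC => /addIr /addrI /oppr_inj.
have := herm_shift 1; rewrite conjC1 !scale1r => herm_sum.
have := herm_shift 'i; rewrite conjCi !scaleNr -!scalerN -!scalerDr.
move=> /(scalerI (neq0Ci C)) skew_diff.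
have := congr2 +%R herm_sum skew_diff.
rewrite addrACA subrr add0r addrACA subrr addr0 -!mulr2n -!scaler_nat.
have two_neq0 : 2%:R != 0 :> C by rewrite pnatr_eq0.
by move=> /(scalerI two_neq0) <-.
Qed.

Lemma strictly_positive_mult_sq_scalar :
  f 1%:M = 1%:M -> (forall a, f (adjmx a) = adjmx (f a)) -> strictly_positive f ->
  forall a, f (adjmx a *m a) = adjmx (f a) *m f a -> exists c, a = c%:M.
Proof.
move=> f1 f_adj f_pos a mult_a.
have [n0|n_gt0] := posnP n.
  by exists 0; apply/matrixP => i; have := ltn_ord i; rewrite {2}n0.
have [c [w w_neq0 w_eigen]] := exists_col_eigenvector (f a) n_gt0.
exists c; apply/eqP; rewrite -subr_eq0 -adjmx_mul_eq0.
apply/contraT => /(f_pos _ (psd_adjmx_mul _ _))[_ /(_ w w_neq0)].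
have f_shift : f (adjmx (a - c%:M) *m (a - c%:M)) =
               adjmx (f a - c%:M) *m (f a - c%:M).
  rewrite !adjmx_mul_subr_scalar -[(_ * c)%:M]scalemx1.
  by rewrite linearD linearB linearD !linearZ /= f1 f_adj mult_a.
by rewrite f_shift -!mulmxA mulmxBl w_eigen mul_scalar_mx subrr !mulmx0 mxE ltxx.
Qed.

Lemma iter_linear k : linear (iter k f).
Proof. by elim: k => [|k IHk] b u v //=; rewrite IHk linearP. Qed.

Lemma iter_unital k : f 1%:M = 1%:M -> iter k f 1%:M = 1%:M.
Proof. by move=> f1; elim: k => //= k ->. Qed.

Lemma iter_adjmx k : (forall a, f (adjmx a) = adjmx (f a)) ->
  forall a, iter k f (adjmx a) = adjmx (iter k f a).
Proof. by move=> f_adj a; elim: k => //= k ->. Qed.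

Lemma mult_dom_scalar c : f 1%:M = 1%:M -> mult_dom f c%:M.
Proof.
move=> f1; have f_scalar d : f d%:M = d%:M.
  by rewrite -scalemx1 linearZ /= f1.
by rewrite /mult_dom adjmx_scalar -!scalar_mxM !f_scalar adjmx_scalar -!scalar_mxM.
Qed.

End LinearMap.

Lemma unital_schwarz_adjmx {C : numClosedFieldType} {n}
    {phi : {linear 'M[C]_n -> 'M[C]_n}} :
  unital_schwarz phi -> forall a, phi (adjmx a) = adjmx (phi a).
Proof.
case=> _ schwarz; apply: commute_adjmx_of_herm_squares => [|a].
  exact: linearP.
by have [+ _] := schwarz a; rewrite adjmxB adjmxM adjmxK => /addIr.
Qed.

Theorem lemma3p3 (R : realType) (D : nat)
  (phi : {linear 'M[R[i]]_D -> 'M[R[i]]_D}) :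
  unital_schwarz phi -> primitive phi ->
  (forall a : 'M[R[i]]_D,
     (forall n : nat, mult_dom (iter n phi) a) <-> exists c : R[i], a = c%:M) /\
  (exists k : nat,
     (forall a : 'M[R[i]]_D,
        mult_dom (iter k phi) a <-> (forall n : nat, mult_dom (iter n phi) a)) /\
     (forall a : 'M[R[i]]_D, mult_dom (iter k phi) a <-> exists c : R[i], a = c%:M)).
Proof.
move=> schwarz [N phiN_pos].
have phi_lin : linear phi by exact: linearP.
have phi1 : phi 1%:M = 1%:M by case: schwarz.
have phi_adj := unital_schwarz_adjmx schwarz.
have dom_scalar a : mult_dom (iter N phi) a -> exists c, a = c%:M.
  case=> mult_a _; apply: strictly_positive_mult_sq_scalar mult_a.
  - exact: iter_linear.
  - exact: iter_unital.
  - exact: iter_adjmx.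
  - exact: phiN_pos.
have scalar_dom a : (exists c, a = c%:M) -> forall k, mult_dom (iter k phi) a.
  by case=> c -> k; apply: mult_dom_scalar; [exact: iter_linear | exact: iter_unital].
split=> [a|]; first by split=> [/(_ N)/dom_scalar|/scalar_dom].
exists N; split=> a; split.
- by move/dom_scalar/scalar_dom.
- exact.
- exact: dom_scalar.
- by move/scalar_dom.
Qed.
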